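(* Let $n\le -1$ be an odd integer with $3\mid n$. If $n\equiv 3\pmod 4$, then $w$ does not divide $q_n$ modulo $3$. If $n\equiv 1\pmod 4$, then $w^2$ divides $q_n$ modulo $3$ but $w^3$ does not.
   Context: Define $q_n\in\mathbb{Z}[w]$ for odd $n\le -1$ by $q_{-1}=w^3-w^2+2w-7$, $q_{-3}=w^5-2w^4-2w^3+5w^2+3w-9$, $q_{-5}=w^7-2w^6-4w^5+8w^4+4w^3-7w^2+2w-7$, and $q_n=(w^2-1)(q_{n+2}-q_{n+4})+q_{n+6}$ for odd $n<-5$. Divisibility ''modulo 3'' refers to the reductions in $\mathbb{F}_3[w]$. *)

From HB Require Import structures.
From mathcomp Require Import all_boot all_order all_algebra.
Set Implicit Arguments. Unset Strict Implicit. Unset Printing Implicit Defensive.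
Import Order.TTheory GRing.Theory Num.Theory.
Local Open Scope ring_scope.

Definition q_m1 : {poly int} := 'X^3 - 'X^2 + 2%:P * 'X - 7%:P.
Definition q_m3 : {poly int} :=
  'X^5 - 2%:P * 'X^4 - 2%:P * 'X^3 + 5%:P * 'X^2 + 3%:P * 'X - 9%:P.
Definition q_m5 : {poly int} :=
  'X^7 - 2%:P * 'X^6 - 4%:P * 'X^5 + 8%:P * 'X^4 + 4%:P * 'X^3
  - 7%:P * 'X^2 + 2%:P * 'X - 7%:P.

(* qtrip k = (Q k, Q (k+1), Q (k+2)) where Q k := q_{-(2k+1)}.
   The recursion q_n = (w^2-1)(q_{n+2} - q_{n+4}) + q_{n+6} reads
   Q (k+3) = (w^2-1)(Q (k+2) - Q (k+1)) + Q k. *)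
Fixpoint qtrip (k : nat) : {poly int} * {poly int} * {poly int} :=
  match k with
  | O => (q_m1, q_m3, q_m5)
  | S k' => let: (a, b, c) := qtrip k' in
            (b, c, ('X^2 - 1) * (c - b) + a)
  end.

Definition Qk (k : nat) : {poly int} := (qtrip k).1.1.

(* q_n for odd n <= -1: n = -(2k+1), i.e. k = (|n| - 1)/2 *)
Definition q (n : int) : {poly int} := Qk ((`|n|%N).-1)./2.

Definition q3 (n : int) : {poly 'F_3} :=
  map_poly (fun z : int => z%:~R : 'F_3) (q n).

From HB Require Import structures.
From mathcomp Require Import all_boot all_order all_algebra zify.
Import Order.TTheory GRing.Theory Num.Theory.
Local Open Scope ring_scope.

(* Divisibility of q_n by w, w^2, w^3 modulo 3 only depends on the first three
   coefficients of q_n reduced modulo 3 (the "3-jet" of q_n).  The recursion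
   q_n = (w^2-1)(q_{n+2} - q_{n+4}) + q_{n+6} is compatible with taking 3-jets,
   so the 3-jets of three consecutive terms evolve by an explicit map on
   (F_3^3)^3.  Starting from the 3-jets of q_{-1}, q_{-3}, q_{-5}, this map
   returns to its initial state after 6 steps, hence the 3-jet of
   Q k = q_{-(2k+1)} depends only on k mod 6.  Finally, for odd n <= -1 with
   3 | n, the index k = (|n|-1)/2 satisfies k = 4 (mod 6) when n = 3 (mod 4)
   and k = 1 (mod 6) when n = 1 (mod 4); the corresponding 3-jets are
   (2,2,1) and (0,0,2), which give the two claims. *)

Lemma dvdp_Xn_coef (R : fieldType) (j : nat) (p : {poly R}) :
  ('X^j %| p) = all (fun i => p`_i == 0) (iota 0 j).
Proof.
apply/dvdpP/allP => [[r ->] i | low_vanish].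
  by rewrite mem_iota add0n => /andP[_ ij]; rewrite coefMXn ij.
exists (drop_poly j p); rewrite -[LHS](poly_take_drop j p).
suff -> : take_poly j p = 0 by rewrite add0r.
apply/polyP => i; rewrite coef_take_poly coef0.
case: ltnP => // ij; apply/eqP/low_vanish.
by rewrite mem_iota add0n.
Qed.

Definition jet := ('F_3 * 'F_3 * 'F_3)%type.

Definition jet3 (p : {poly int}) : jet := ((p`_0)%:~R, (p`_1)%:~R, (p`_2)%:~R).

Definition jet_rec (a b c : jet) : jet :=
  let '(a0, a1, a2) := a in let '(b0, b1, b2) := b in let '(c0, c1, c2) := c in
  (a0 - (c0 - b0), a1 - (c1 - b1), a2 + (c0 - b0) - (c2 - b2)).

Lemma jet3_rec (a b c : {poly int}) :
  jet3 (('X^2 - 1) * (c - b) + a) = jet_rec (jet3 a) (jet3 b) (jet3 c).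
Proof.
rewrite /jet3 /jet_rec mulrBl mul1r [_ * (c - b)]mulrC.
rewrite !(coefD, coefB, coefMXn) /= !(coefN, coefB, subnn).
rewrite !(intrD, intrB, intrN) ?mulr0z !add0r.
by congr (_, _, _); rewrite addrC ?addrA.
Qed.

Definition jet_shift (s : jet * jet * jet) : jet * jet * jet :=
  let '(a, b, c) := s in (b, c, jet_rec a b c).

Definition jets (t : {poly int} * {poly int} * {poly int}) : jet * jet * jet :=
  (jet3 t.1.1, jet3 t.1.2, jet3 t.2).

Lemma jets_qtrip (k : nat) : jets (qtrip k) = iter k jet_shift (jets (qtrip 0)).
Proof.
elim: k => [|k IH] //=; rewrite -IH.
by case: (qtrip k) => [[a b] c]; rewrite /jets /= jet3_rec.
Qed.

Lemma jets_qtrip0 : jets (qtrip 0) = ((2, 2, 2), (0, 0, 2), (2, 2, 2)).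
Proof.
rewrite /jets /= /jet3 /q_m1 /q_m3 /q_m5.
by rewrite !(coefD, coefB, coefN, coefCM, coefXn, coefX, coefC); apply/eqP.
Qed.

Lemma jet_shift_period : iter 6 jet_shift (jets (qtrip 0)) = jets (qtrip 0).
Proof. by rewrite jets_qtrip0; apply/eqP. Qed.

Lemma jet3_Qk (k : nat) :
  jet3 (Qk k) = (iter (k %% 6) jet_shift (jets (qtrip 0))).1.1.
Proof.
rewrite /Qk -[jet3 _]/((jets (qtrip k)).1.1) jets_qtrip.
rewrite {1}(divn_eq k 6) addnC iterD; congr (iter _ _ _).1.1.
by elim: (k %/ 6)%N => [|t IH] //; rewrite mulSn iterD IH jet_shift_period.
Qed.

Lemma q_index_mod6 (n : int) :
  n <= -1 -> ~~ (2 %| n)%Z -> (3 %| n)%Z ->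
  ((n %% 4)%Z = 3 -> ((`|n|%N).-1./2 %% 6 = 4)%N) /\
  ((n %% 4)%Z = 1 -> ((`|n|%N).-1./2 %% 6 = 1)%N).
Proof. by move=> *; split=> ?; lia. Qed.

Lemma q3_coef (n : int) (i : nat) : (q3 n)`_i = ((q n)`_i)%:~R.
Proof. by rewrite /q3 coef_map_id0. Qed.

Theorem proposition5p1 (n : int) :
  n <= -1 -> ~~ (2 %| n)%Z -> (3 %| n)%Z ->
  (((n %% 4)%Z = 3 -> ~~ ('X %| q3 n)) /\
   ((n %% 4)%Z = 1 -> ('X^2 %| q3 n) && ~~ ('X^3 %| q3 n))).
Proof.
move=> n_neg n_odd n_3; have [k4 k1] := @q_index_mod6 n n_neg n_odd n_3.
rewrite -['X]expr1 !dvdp_Xn_coef /= !q3_coef.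
have := jet3_Qk (`|n|%N).-1./2; rewrite jets_qtrip0 /jet3 -/(q n) => jet_q.
by split=> [/k4 | /k1] k_mod; move: jet_q; rewrite k_mod => -[c0 c1 c2]; rewrite c0 ?c1 ?c2.
Qed.
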